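(* Let $A=\{a_1,\dots,a_k\}$ be a finite nonempty set and $M\le A^A$ a monoid. The following are equivalent: (i) $M$ is u-closed (equivalently, $M^{*}$ is a clone); (ii) $M^{*}=\mathrm{Pol}\,\Gamma_M$; (iii) $C\subseteq M$ and for every binary $f\in M^{*}$ the unary map $x\mapsto f(x,x)$ belongs to $M$; (iv) $\Gamma_M$ is a generalized quasiorder.
   Context: $C$ is the set of all constant unary maps on $A$. $\Gamma_M:=\{(g a_1,\dots,g a_k)\mid g\in M\}\subseteq A^k$. $\mathrm{Pol}\,\rho$ is the set of all finitary operations on $A$ preserving $\rho$ (componentwise application to tuples of $\rho$ gives a tuple of $\rho$). A translation of an $n$-ary $f$ is a unary map $x\mapsto f(b_1,\dots,b_{i-1},x,b_{i+1},\dots,b_n)$ with fixed $b_j\in A$; $\mathrm{trl}(f)$ is the set of translations of $f$ ($\{f\}$ if $f$ is unary); $M^*:=\{f\mid\mathrm{trl}(f)\subseteq M\}$. The u-closure $\overline M$ is the intersection of all monoids $N$ with $M\subseteq N\le A^A$ such that $N^*$ is a clone; $M$ is u-closed if $\overline M=M$. A relation $\rho\subseteq A^m$ is a generalized quasiorder if it is reflexive and, for every $m\times m$-matrix over $A$ whose rows and columns all lie in $\rho$, its diagonal lies in $\rho$. *)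

From mathcomp Require Import all_boot.
Set Implicit Arguments. Unset Strict Implicit. Unset Printing Implicit Defensive.

Section Defs.
Variable A : finType.

(** An n-ary operation on A: a (finite) function from n-tuples, i.e.
    maps 'I_n -> A, to A.  Finitary operations have arity n >= 1; an
    operation of arity n.+1 is an element of [Op n.+1]. *)
Definition Op (n : nat) := {ffun {ffun 'I_n -> A} -> A}.

Definition OpSet := forall n : nat, Op n.+1 -> Prop.

Definition is_monoid (M : {set {ffun A -> A}}) : Prop :=
  [ffun x => x] \in M /\
  (forall g h, g \in M -> h \in M -> [ffun x => g (h x)] \in M).

Definition translation n (f : Op n) (i : 'I_n) (b : {ffun 'I_n -> A})
  : {ffun A -> A} :=
  [ffun x => f [ffun j => if j == i then x else b j]].

Definition trl_sub n (f : Op n) (M : {set {ffun A -> A}}) : Prop :=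
  forall i b, translation f i b \in M.

Definition Mstar (M : {set {ffun A -> A}}) : OpSet :=
  fun n f => trl_sub f M.

Definition proj n (i : 'I_n) : Op n := [ffun x : {ffun 'I_n -> A} => x i].
Definition compose m n (f : Op m) (gs : 'I_m -> Op n) : Op n :=
  [ffun x => f [ffun j => gs j x]].

Definition is_clone (F : OpSet) : Prop :=
  (forall n (i : 'I_n.+1), F n (proj i)) /\
  (forall m n (f : Op m.+1) (gs : 'I_m.+1 -> Op n.+1),
      F m f -> (forall j, F n (gs j)) -> F n (compose f gs)).

Definition uclosure (M : {set {ffun A -> A}}) (g : {ffun A -> A}) : Prop :=
  forall N : {set {ffun A -> A}},
    is_monoid N -> M \subset N -> is_clone (Mstar N) -> g \in N.

Definition u_closed (M : {set {ffun A -> A}}) : Prop :=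
  forall g, uclosure M g <-> g \in M.

Definition Rel (m : nat) := {ffun 'I_m -> A} -> Prop.

Definition preserves n m (f : Op n) (rho : Rel m) : Prop :=
  forall r : 'I_n -> {ffun 'I_m -> A},
    (forall j, rho (r j)) -> rho [ffun i => f [ffun j => r j i]].

Definition Pol m (rho : Rel m) : OpSet := fun n f => preserves f rho.

Definition a_ (i : 'I_#|A|) : A := enum_val i.

Definition Gamma (M : {set {ffun A -> A}}) : Rel #|A| :=
  fun t => exists2 g, g \in M & forall i, t i = g (a_ i).

Definition C_sub (M : {set {ffun A -> A}}) : Prop :=
  forall c : A, [ffun _ : A => c] \in M.

Definition reflexive_rel m (rho : Rel m) : Prop :=
  forall x : A, rho [ffun _ => x].

Definition gen_quasiorder m (rho : Rel m) : Prop :=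
  reflexive_rel rho /\
  forall X : 'I_m -> 'I_m -> A,
    (forall i, rho [ffun j => X i j]) ->
    (forall j, rho [ffun i => X i j]) ->
    rho [ffun i => X i i].

End Defs.

From mathcomp Require Import all_boot.
Set Implicit Arguments. Unset Strict Implicit. Unset Printing Implicit Defensive.

(* All four conditions are equivalent to: M contains the constants and is
   closed under diagonals, i.e. whenever every row x |-> phi(a, x) and every
   column x |-> phi(x, a) of a binary map phi lies in M, so does its diagonal
   x |-> phi(x, x).  Under this condition an operation of M^* stays in M^*
   when its arguments are replaced, one at a time, by unary maps of M; this
   gives closure of M^* under composition and M^* = Pol Gamma_M.  Conversely
   Pol Gamma_M is always a clone, and clones M^* yield the diagonal condition
   by identifying the two variables of a binary operation.  Since
   Gamma_M encodes M as tuples, the diagonal condition is literally the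
   generalized quasiorder condition for Gamma_M. *)

Lemma is_clone_ext (A : finType) (F G : OpSet A) :
  (forall n f, F n f <-> G n f) -> is_clone F -> is_clone G.
Proof.
move=> FG [Fproj Fcomp]; split=> [n i | m n f gs Gf Ggs]; apply/FG => //.
by apply: Fcomp => [|j]; apply/FG.
Qed.

Lemma Pol_clone (A : finType) m (rho : Rel A m) : is_clone (Pol rho).
Proof.
split=> [n i r rho_r | m' n f gs f_pres gs_pres r rho_r].
  suff -> : [ffun l => proj A i [ffun j => r j l]] = r i by [].
  by apply/ffunP=> l; rewrite !ffunE.
have -> : [ffun l => compose f gs [ffun j => r j l]]
          = [ffun l => f [ffun k => [ffun l' => gs k [ffun j => r j l']] l]].
  by apply/ffunP=> l; rewrite !ffunE; congr (f _); apply/ffunP=> k; rewrite !ffunE.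
by apply: f_pres => k; apply: gs_pres.
Qed.

Lemma translation_compose (A : finType) m n (f : Op A m) (gs : 'I_m -> Op A n)
    (i : 'I_n) (b : {ffun 'I_n -> A}) :
  translation (compose f gs) i b = [ffun x => f [ffun j => translation (gs j) i b x]].
Proof. by apply/ffunP=> x; rewrite !ffunE; congr (f _); apply/ffunP=> j; rewrite !ffunE. Qed.

Section UnaryMonoid.
Variables (A : finType) (M : {set {ffun A -> A}}).

Definition diag_closed : Prop := forall phi : A -> A -> A,
  (forall x, [ffun y => phi x y] \in M) -> (forall y, [ffun x => phi x y] \in M) ->
  [ffun x => phi x x] \in M.

Definition fun_of_tuple (t : {ffun 'I_#|A| -> A}) : {ffun A -> A} :=
  [ffun x => t (enum_rank x)].

Lemma GammaP t : Gamma M t <-> fun_of_tuple t \in M.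
Proof.
split=> [[g gM t_g] | tM].
  suff -> : fun_of_tuple t = g by [].
  by apply/ffunP=> x; rewrite ffunE t_g /a_ enum_rankK.
by exists (fun_of_tuple t) => // i; rewrite ffunE /a_ enum_valK.
Qed.

Lemma Gamma_ffunP (g : A -> A) : Gamma M [ffun i => g (a_ i)] <-> [ffun x => g x] \in M.
Proof.
split=> [/GammaP | gM]; last by exists [ffun x => g x] => // i; rewrite !ffunE.
suff -> : fun_of_tuple [ffun i => g (a_ i)] = [ffun x => g x] by [].
by apply/ffunP=> x; rewrite !ffunE /a_ enum_rankK.
Qed.

Lemma diag_closed_gen_quasiorder :
  C_sub M /\ diag_closed <-> gen_quasiorder (Gamma M).
Proof.
split=> [[Mconst Mdiag] | [Gamma_refl Gamma_diag]]; split.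
- by move=> c; apply/(Gamma_ffunP (fun _ => c)).
- move=> X X_rows X_cols; apply/GammaP.
  pose phi x y := X (enum_rank x) (enum_rank y).
  have -> : fun_of_tuple [ffun i => X i i] = [ffun x => phi x x].
    by apply/ffunP=> x; rewrite !ffunE.
  apply: Mdiag => [x | y].
    have -> : [ffun y => phi x y] = fun_of_tuple [ffun j => X (enum_rank x) j].
      by apply/ffunP=> y; rewrite !ffunE.
    exact/GammaP.
  have -> : [ffun x => phi x y] = fun_of_tuple [ffun i => X i (enum_rank y)].
    by apply/ffunP=> x; rewrite !ffunE.
  exact/GammaP.
- by move=> c; apply/(Gamma_ffunP (fun _ => c)).
- move=> phi phi_rows phi_cols; apply/(Gamma_ffunP (fun x => phi x x)).
  apply: (Gamma_diag (fun i j => phi (a_ i) (a_ j))) => [i | j].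
    exact/(Gamma_ffunP (phi (a_ i))).
  exact/(Gamma_ffunP (phi^~ (a_ j))).
Qed.

Definition bin_op (phi : A -> A -> A) : Op A 2 :=
  [ffun v : {ffun 'I_2 -> A} => phi (v ord0) (v ord_max)].

Lemma Mstar_bin_op phi :
  (forall x, [ffun y => phi x y] \in M) -> (forall y, [ffun x => phi x y] \in M) ->
  Mstar M (bin_op phi).
Proof.
move=> phi_rows phi_cols [[|[|i]] lt_i2] b //.
  suff -> : translation (bin_op phi) (Ordinal lt_i2) b = [ffun x => phi x (b ord_max)].
    exact: phi_cols.
  by apply/ffunP=> x; rewrite !ffunE.
suff -> : translation (bin_op phi) (Ordinal lt_i2) b = [ffun y => phi (b ord0) y].
  exact: phi_rows.
by apply/ffunP=> y; rewrite !ffunE.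
Qed.

Lemma diag_closed_of_Mstar_bin :
  (forall f : Op A 2, Mstar M f -> [ffun x => f [ffun _ => x]] \in M) -> diag_closed.
Proof.
move=> Mstar_diag phi phi_rows phi_cols.
suff <- : [ffun x => bin_op phi [ffun _ => x]] = [ffun x => phi x x].
  exact/Mstar_diag/Mstar_bin_op.
by apply/ffunP=> x; rewrite !ffunE.
Qed.

Hypothesis monoid_M : is_monoid M.

Lemma mem_of_point g : (A -> g \in M) -> g \in M.
Proof.
case: (pickP (@predT A)) => [a _ /(_ a) // | A0 _].
suff -> : g = [ffun x => x] by exact: monoid_M.1.
by apply/ffunP=> x; have := A0 x.
Qed.

Lemma u_closed_clone : u_closed M <-> is_clone (Mstar M).
Proof.
have Mstar_sub (N : {set {ffun A -> A}}) n (f : Op A n.+1) :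
    M \subset N -> Mstar M f -> Mstar N f.
  by move=> /subsetP sMN Mf i b; apply/sMN/Mf.
split=> [Mu | Mclone g]; last first.
  by split=> [/(_ M monoid_M (subxx M) Mclone) // | gM N _ /subsetP sMN _]; apply: sMN.
split=> [n i j b | m n f gs Mf Mgs i b]; apply/Mu => N _ sMN [Nproj Ncomp].
  exact: Nproj.
by apply: Ncomp => [|j]; apply: Mstar_sub sMN _.
Qed.

Lemma clone_diag_closed : is_clone (Mstar M) -> C_sub M /\ diag_closed.
Proof.
move=> [Mproj Mcomp]; split=> [c | phi phi_rows phi_cols].
  suff <- : translation (proj A (ord0 : 'I_2)) ord_max [ffun _ => c] = [ffun _ => c].
    exact: Mproj.
  by apply/ffunP=> x; rewrite !ffunE.
apply: mem_of_point => a.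
pose diag := compose (bin_op phi) (fun _ => proj A (ord0 : 'I_1)).
suff <- : translation diag ord0 [ffun _ => a] = [ffun x => phi x x].
  exact: (Mcomp _ _ _ _ (Mstar_bin_op phi_rows phi_cols) (fun _ => Mproj 0 ord0)).
by apply/ffunP=> x; rewrite !ffunE eqxx.
Qed.

Section DiagClosed.
Hypotheses (Mconst : C_sub M) (Mdiag : diag_closed).

Section Superposition.
Variables (n : nat) (f : Op A n.+1) (h : 'I_n.+1 -> {ffun A -> A}).
Hypotheses (Mf : Mstar M f) (Mh : forall j, h j \in M).

Definition subst_prefix k (b : {ffun 'I_n.+1 -> A}) : {ffun A -> A} :=
  [ffun x => f [ffun j : 'I_n.+1 => if j < k then h j x else b j]].

Lemma subst_prefix_mem k b : k <= n.+1 -> subst_prefix k b \in M.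
Proof.
elim: k b => [|k IHk] b lt_k.
  suff -> : subst_prefix 0 b = [ffun _ => f b] by [].
  by apply/ffunP=> x; rewrite !ffunE; congr (f _); apply/ffunP=> j; rewrite ffunE.
pose p := Ordinal lt_k.
pose prefix x := [ffun j : 'I_n.+1 => if j < k then h j x else b j].
pose phi x y : A := translation f p (prefix x) (h p y).
have -> : subst_prefix k.+1 b = [ffun x => phi x x].
  apply/ffunP=> x; rewrite /phi !ffunE; congr (f _); apply/ffunP=> j; rewrite !ffunE.
  rewrite ltnS leq_eqVlt; case: (eqVneq j p) => [-> | neq_jp]; first by rewrite eqxx ltnn.
  by rewrite -(inj_eq val_inj) /= in neq_jp; rewrite (negbTE neq_jp).
apply: Mdiag => [x | y].
  exact: monoid_M.2 (Mf p (prefix x)) (Mh p).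
pose b' := [ffun j : 'I_n.+1 => if j == p then h p y else b j].
suff -> : [ffun x => phi x y] = subst_prefix k b' by apply: IHk; apply: ltnW.
apply/ffunP=> x; rewrite /phi !ffunE; congr (f _); apply/ffunP=> j; rewrite !ffunE.
by case: eqP => [-> | _] //=; rewrite ltnn.
Qed.

Lemma Mstar_superposition_mem : [ffun x => f [ffun j => h j x]] \in M.
Proof.
apply: mem_of_point => a.
suff <- : subst_prefix n.+1 [ffun _ => a] = [ffun x => f [ffun j => h j x]].
  exact: subst_prefix_mem.
by apply/ffunP=> x; rewrite !ffunE; congr (f _); apply/ffunP=> j; rewrite !ffunE ltn_ord.
Qed.

End Superposition.

Lemma Mstar_clone : is_clone (Mstar M).
Proof.
split=> [n i j b | m n f gs Mf Mgs i b].
  have [<- | neq_ij] := eqVneq i j.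
    suff -> : translation (proj A i) i b = [ffun x => x] by exact: monoid_M.1.
    by apply/ffunP=> x; rewrite !ffunE eqxx.
  suff -> : translation (proj A i) j b = [ffun _ => b i] by [].
  by apply/ffunP=> x; rewrite !ffunE (negbTE neq_ij).
by rewrite translation_compose; apply: Mstar_superposition_mem => // k; apply: Mgs.
Qed.

Lemma Mstar_Pol n (f : Op A n.+1) : Mstar M f <-> Pol (Gamma M) f.
Proof.
split=> [Mf r Gamma_r | f_pres i b].
  apply/GammaP.
  suff -> : fun_of_tuple [ffun l => f [ffun j => r j l]]
            = [ffun x => f [ffun j => fun_of_tuple (r j) x]].
    by apply: Mstar_superposition_mem => // j; apply/GammaP.
  by apply/ffunP=> x; rewrite !ffunE; congr (f _); apply/ffunP=> j; rewrite !ffunE.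
pose r j := [ffun l => if j == i then a_ l else b j].
have Gamma_r j : Gamma M (r j).
  apply/(Gamma_ffunP (fun x => if j == i then x else b j)).
  by case: eqP => _; [exact: monoid_M.1 | exact: Mconst].
have /GammaP := f_pres r Gamma_r.
suff -> : fun_of_tuple [ffun l => f [ffun j => r j l]] = translation f i b by [].
apply/ffunP=> x; rewrite !ffunE; congr (f _); apply/ffunP=> j; rewrite !ffunE.
by rewrite /a_ enum_rankK.
Qed.

Lemma Mstar_bin_diag (f : Op A 2) : Mstar M f -> [ffun x => f [ffun _ => x]] \in M.
Proof.
move=> Mf; suff <- : [ffun x => f [ffun j => [ffun y => y] x]] = [ffun x => f [ffun _ => x]].
  by apply: Mstar_superposition_mem => // _; exact: monoid_M.1.
by apply/ffunP=> x; rewrite !ffunE; congr (f _); apply/ffunP=> j; rewrite !ffunE.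
Qed.

End DiagClosed.

Lemma Mstar_clone_iff : is_clone (Mstar M) <-> C_sub M /\ diag_closed.
Proof. by split=> [/clone_diag_closed | [Mconst Mdiag]]; last exact: Mstar_clone. Qed.

End UnaryMonoid.

Theorem proposition3p9 (A : finType) (HA : 0 < #|A|)
    (M : {set {ffun A -> A}}) (HM : is_monoid M) :
  [<-> u_closed M;
       (forall n (f : Op A n.+1), Mstar M f <-> Pol (Gamma M) f);
       C_sub M /\
         (forall f : Op A 2, Mstar M f ->
            [ffun x => f [ffun _ => x]] \in M);
       gen_quasiorder (Gamma M)].
Proof.
tfae.
- by move=> /(u_closed_clone HM)/(Mstar_clone_iff HM)[Mconst Mdiag] n f; apply: Mstar_Pol.
- move=> Mstar_Pol_eq.
  have /(Mstar_clone_iff HM)[Mconst Mdiag] :=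
    is_clone_ext (fun n f => iff_sym (Mstar_Pol_eq n f)) (Pol_clone (Gamma M)).
  by split=> // f; apply: Mstar_bin_diag.
- by move=> [Mconst /diag_closed_of_Mstar_bin Mdiag]; apply/diag_closed_gen_quasiorder.
- by move=> /diag_closed_gen_quasiorder/(Mstar_clone_iff HM)/(u_closed_clone HM).
Qed.
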